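(* If an $(M,d_s,d_x,\epsilon)$ code exists, then \[\epsilon\ge\inf_{P_{ZY|X}}\ \sup_{P_{\bar X|\bar Z\bar Y}}\ \sup_{\gamma\ge0}\Big\{\mathbb P\big[f_{\bar X|\bar Z\bar Y}(S,X,Z,Y)\ge\gamma\big]-\exp(-\gamma)\Big\},\] where the infimum is over conditional distributions $P_{ZY|X}:\mathcal X\to\widehat{\mathcal S}\times\widehat{\mathcal X}$, $(S,X,Z,Y)\sim P_{SX}P_{ZY|X}$, the middle supremum is over conditional distributions $P_{\bar X|\bar Z\bar Y}:\widehat{\mathcal S}\times\widehat{\mathcal X}\to\mathcal X$ such that the Radon–Nikodym derivative of $P_{\bar X|\bar Z=z,\bar Y=y}$ with respect to $P_X$ at $x$ exists for $P_{ZY|X}P_X$-a.e. $(z,y,x)$, and \[f_{\bar X|\bar Z\bar Y}(s,x,z,y)=\log\frac{\mathrm dP_{\bar X|\bar Z=z,\bar Y=y}}{\mathrm dP_X}(x)+\sup_{\lambda_s\ge0}\lambda_s(\mathsf d_s(s,z)-d_s)+\sup_{\lambda_x\ge0}\lambda_x(\mathsf d_x(x,y)-d_x)-\log M.\]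
   Context: Let $\mathcal S,\mathcal X,\widehat{\mathcal S},\widehat{\mathcal X}$ be finite sets, $P_{SX}$ a distribution on $\mathcal S\times\mathcal X$, and $\mathsf d_s:\mathcal S\times\widehat{\mathcal S}\to[0,\infty)$, $\mathsf d_x:\mathcal X\times\widehat{\mathcal X}\to[0,\infty)$ distortion measures; fix $d_s,d_x\ge0$. An $(M,d_s,d_x,\epsilon)$ code is a random encoder $P_{U|X}:\mathcal X\to\{1,\dots,M\}$ and a random decoder $P_{ZY|U}:\{1,\dots,M\}\to\widehat{\mathcal S}\times\widehat{\mathcal X}$ (so $S-X-U-(Z,Y)$) such that $\mathbb P[\mathsf d_s(S,Z)>d_s\text{ or }\mathsf d_x(X,Y)>d_x]\le\epsilon$. $\log$ and $\exp$ are to a common base. *)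

From HB Require Import structures.
From mathcomp Require Import all_boot all_order all_algebra.
From mathcomp Require Import all_classical all_reals.
From mathcomp Require Import ereal exp.
Set Implicit Arguments. Unset Strict Implicit. Unset Printing Implicit Defensive.
Import Order.TTheory GRing.Theory Num.Theory.
Local Open Scope ring_scope.
Local Open Scope classical_set_scope.

Section Defs.
Variable R : realType.

Definition is_pmf (T : finType) (p : T -> R) : Prop :=
  (forall t, 0 <= p t) /\ \sum_(t : T) p t = 1.

Definition is_kernel (A B : finType) (k : A -> B -> R) : Prop :=
  forall a, is_pmf (k a).

Definition marg2 (S X : finType) (P : S * X -> R) (x : X) : R :=
  \sum_(s : S) P (s, x).

(* An (M, d_s, d_x, eps) code: random encoder P_{U|X} : X -> {1..M} (here 'I_M)
   and random decoder P_{ZY|U} : {1..M} -> Shat x Xhat with excess-distortion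
   probability at most eps. *)
Definition is_code (S X Sh Xh : finType) (P : S * X -> R)
    (dS : S -> Sh -> R) (dX : X -> Xh -> R) (M : nat) (ds dx eps : R) : Prop :=
  exists (E : X -> 'I_M -> R) (D : 'I_M -> Sh * Xh -> R),
    [/\ is_kernel E, is_kernel D &
      \sum_(sx : S * X) \sum_(u : 'I_M) \sum_(zy : Sh * Xh)
        P sx * E sx.2 u * D u zy *
          ((ds < dS sx.1 zy.1) || (dx < dX sx.2 zy.2))%:R <= eps].

Definition elogb (b p : R) : \bar R :=
  if p == 0 then -oo%E else (ln p / ln b)%:E.

Definition suplam (t : R) : \bar R :=
  ereal_sup [set (l * t)%:E | l in [set l : R | 0 <= l]].

(* f_{Xbar|Zbar Ybar}(s,x,z,y); the Radon-Nikodym derivative of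
   P_{Xbar|Zbar=z,Ybar=y} w.r.t. P_X at x is Pbar (z,y) x / P_X x.
   The (undefined) sum -oo + +oo is read as +oo (dual addition). *)
Definition finfo (S X Sh Xh : finType) (b : R) (P : S * X -> R)
    (Pbar : Sh * Xh -> X -> R) (dS : S -> Sh -> R) (dX : X -> Xh -> R)
    (ds dx : R) (M : nat) (s : S) (x : X) (z : Sh) (y : Xh) : \bar R :=
  dual_adde (dual_adde (dual_adde (elogb b (Pbar (z, y) x / marg2 P x))
                          (suplam (dS s z - ds)))
               (suplam (dX x y - dx)))
     (- (ln M%:R / ln b))%:E.

Definition prob_f_ge (S X Sh Xh : finType) (b : R) (P : S * X -> R)
    (W : X -> Sh * Xh -> R) (Pbar : Sh * Xh -> X -> R)
    (dS : S -> Sh -> R) (dX : X -> Xh -> R) (ds dx : R) (M : nat) (g : R) : R :=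
  \sum_(sx : S * X) \sum_(zy : Sh * Xh)
    P sx * W sx.2 zy *
      (g%:E <= finfo b P Pbar dS dX ds dx M sx.1 sx.2 zy.1 zy.2)%E%:R.

(* admissible Pbar: a kernel Shat x Xhat -> X such that, for P_{ZY}-a.e. (z,y),
   P_{Xbar|z,y} << P_X (so the RN derivative exists) *)
Definition admissible (S X Sh Xh : finType) (P : S * X -> R)
    (W : X -> Sh * Xh -> R) (Pbar : Sh * Xh -> X -> R) : Prop :=
  is_kernel Pbar /\
  forall (zy : Sh * Xh) (x : X),
    0 < \sum_(x' : X) marg2 P x' * W x' zy -> marg2 P x = 0 -> Pbar zy x = 0.

End Defs.

From HB Require Import structures.
From mathcomp Require Import all_boot all_order all_algebra.
From mathcomp Require Import all_classical all_reals.
From mathcomp Require Import ereal exp.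
From mathcomp Require Import lra.
Import Order.TTheory GRing.Theory Num.Theory.
Local Open Scope ring_scope.
Local Open Scope classical_set_scope.

(* Take for P_{ZY|X} the end-to-end channel of the code,
   x |-> sum_u P_{U|X}(u|x) P_{ZY|U}(.|u).  Without excess distortion both
   suprema over lambda vanish, so f >= gamma forces
   P_{Xbar|ZY}(x|z,y) >= M b^gamma P_X(x).  Hence P[f >= gamma] is at most the
   excess-distortion probability, which is <= eps, plus the probability of that
   event.  On the event P_X(x) P_{U|X}(u|x) <= P_{Xbar|ZY}(x|z,y) / (M b^gamma),
   and summing over x, (z,y) and u bounds its probability by b^-gamma. *)

Section Kernels.
Context {R : realType}.

Definition kcomp {A B C : finType} (E : A -> B -> R) (D : B -> C -> R)
    (a : A) (c : C) : R :=
  \sum_b E a b * D b c.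

Lemma kernel_le1 {A B : finType} (k : A -> B -> R) a b : is_kernel k -> k a b <= 1.
Proof.
move=> /(_ a) [k0 <-]; rewrite (bigD1 b) //= lerDl.
by apply: sumr_ge0 => ? _; exact: k0.
Qed.

Lemma pmf_card_gt0 {T : finType} {p : T -> R} : is_pmf p -> (0 < #|T|)%N.
Proof.
case=> _ p1; rewrite lt0n; apply: contra (oner_neq0 R) => /eqP/card0_eq T0.
by rewrite -p1 (eq_bigl _ _ T0) big_pred0_eq.
Qed.

Lemma kernel_card_gt0 {A B : finType} {k : A -> B -> R} :
  (0 < #|A|)%N -> is_kernel k -> (0 < #|B|)%N.
Proof. by case/card_gt0P => a _ /(_ a); exact: pmf_card_gt0. Qed.

Section Composition.
Context {A B C : finType} {E : A -> B -> R} {D : B -> C -> R}.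
Hypotheses (EK : is_kernel E) (DK : is_kernel D).

Lemma kcomp_kernel : is_kernel (kcomp E D).
Proof.
move=> a; split=> [c|].
  by apply: sumr_ge0 => b _; apply: mulr_ge0; [exact: (EK a).1 | exact: (DK b).1].
rewrite /kcomp exchange_big /=.
under eq_bigr do rewrite -mulr_sumr (DK _).2 mulr1.
exact: (EK a).2.
Qed.

Lemma kcomp_le_colsum a c : kcomp E D a c <= \sum_b D b c.
Proof.
apply: ler_sum => b _; apply: ler_piMl; first exact: (DK b).1.
exact: kernel_le1.
Qed.

Lemma sum_colsum : \sum_c \sum_b D b c = #|B|%:R.
Proof.
by rewrite exchange_big /= (eq_bigr (fun=> 1)) ?sumr_const // => b _; rewrite (DK b).2.
Qed.

End Composition.
End Kernels.

Lemma suplam_eq0 (R : realType) (t : R) : t <= 0 -> suplam t = 0%E.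
Proof.
move=> t_le0; apply/eqP; rewrite eq_le; apply/andP; split.
- by apply: ge_ereal_sup => _ [l l_ge0 <-]; rewrite lee_fin mulr_ge0_le0.
- by apply: ereal_sup_ubound; exists 0; rewrite //= mul0r.
Qed.

(* If [q = 0] then [p / q = 0] and [elogb] returns [-oo], so the hypothesis
   fails. *)
Lemma elogb_ratio_ge (R : realType) (b q p g : R) (M : nat) :
  1 < b -> 0 <= q -> 0 <= p -> (0 < M)%N ->
  (g%:E <= dual_adde (elogb b (p / q)) (- (ln M%:R / ln b))%:E)%E ->
  q * (M%:R * b `^ g) <= p.
Proof.
move=> b_gt1 q_ge0 p_ge0 M_gt0; rewrite /elogb.
have [//|pq_neq0] := eqVneq (p / q) 0; rewrite /dual_adde lee_fin.
have q_gt0 : 0 < q.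
  rewrite lt_neqAle q_ge0 andbT eq_sym.
  by apply: contraNneq pq_neq0 => ->; rewrite invr0 mulr0.
have p_gt0 : 0 < p.
  by rewrite lt_neqAle p_ge0 andbT eq_sym; apply: contraNneq pq_neq0 => ->; rewrite mul0r.
have lnb_gt0 : 0 < ln b := ln_gt0 b_gt1.
have M_pos : 0 < M%:R :> R by rewrite ltr0n.
have bg_gt0 : 0 < b `^ g by apply: powR_gt0; apply: lt_trans b_gt1.
rewrite -mulNr -mulrDl ler_pdivlMr // => g_le.
rewrite -ler_ln ?posrE ?mulr_gt0 // !lnM ?posrE ?mulr_gt0 ?invr_gt0 // in g_le *.
rewrite ln_powR lnV ?posrE // in g_le *.
lra.
Qed.

Lemma ler_natr_orb (R : realType) (a b c : bool) : (a ==> b || c) ->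
  a%:R <= b%:R + c%:R :> R.
Proof. by case: a b c => [] [] [] //= _; lra. Qed.

Lemma indicator_markov (R : realType) (q w w' p c : R) :
  0 < c -> 0 <= q -> 0 <= w <= w' -> 0 <= p ->
  q * w * (q * c <= p)%R%:R <= p * w' / c.
Proof.
move=> c_gt0 q_ge0 /andP[w_ge0 w_le] p_ge0; rewrite ler_pdivlMr //.
have [qc_le|_] /= := boolP (q * c <= p); last by rewrite mulr0 mul0r; nra.
by rewrite mulr1; nra.
Qed.

Lemma sum_marg2 {R : realType} {S X : finType} (P : S * X -> R) (F : X -> R) :
  \sum_(sx : S * X) P sx * F sx.2 = \sum_x marg2 P x * F x.
Proof.
under [RHS]eq_bigr do rewrite /marg2 mulr_suml.
by rewrite exchange_big pair_bigA /=; apply: eq_bigr => -[].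
Qed.

Section Converse.
Variables (R : realType) (S X Sh Xh : finType) (P : S * X -> R).
Variables (dS : S -> Sh -> R) (dX : X -> Xh -> R) (ds dx : R) (M : nat) (b : R).
Hypothesis P_ge0 : forall sx, 0 <= P sx.

Definition excess_prob (W : X -> Sh * Xh -> R) : R :=
  \sum_(sx : S * X) \sum_(zy : Sh * Xh)
    P sx * W sx.2 zy * ((ds < dS sx.1 zy.1) || (dx < dX sx.2 zy.2))%:R.

Definition density_tail_prob (W : X -> Sh * Xh -> R) (Pbar : Sh * Xh -> X -> R)
    (c : R) : R :=
  \sum_(sx : S * X) \sum_(zy : Sh * Xh)
    P sx * W sx.2 zy * (marg2 P sx.2 * c <= Pbar zy sx.2)%R%:R.

Lemma marg2_ge0 x : 0 <= marg2 P x.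
Proof. by apply: sumr_ge0 => s _; exact: P_ge0. Qed.

Lemma finfo_no_excess (Pbar : Sh * Xh -> X -> R) s x z y :
  dS s z <= ds -> dX x y <= dx ->
  finfo b P Pbar dS dX ds dx M s x z y =
    dual_adde (elogb b (Pbar (z, y) x / marg2 P x)) (- (ln M%:R / ln b))%:E.
Proof.
move=> dS_le dX_le.
rewrite /finfo !suplam_eq0 ?subr_le0 //.
by case: elogb => [r||] //; rewrite /dual_adde /= !addr0.
Qed.

Lemma prob_f_ge_split (W : X -> Sh * Xh -> R) (Pbar : Sh * Xh -> X -> R) g :
  1 < b -> (0 < M)%N -> (forall x zy, 0 <= W x zy) -> is_kernel Pbar ->
  prob_f_ge b P W Pbar dS dX ds dx M g <=
    excess_prob W + density_tail_prob W Pbar (M%:R * b `^ g).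
Proof.
move=> b_gt1 M_gt0 W_ge0 PbarK.
rewrite /prob_f_ge -big_split /=; apply: ler_sum => -[s x] _.
rewrite -big_split /=; apply: ler_sum => -[z y] _.
rewrite -mulrDr ler_wpM2l ?mulr_ge0 //; apply: ler_natr_orb.
apply/implyP => f_ge /=; case: ltP => //= dS_le; case: ltP => //= dX_le.
rewrite finfo_no_excess // in f_ge.
by apply: elogb_ratio_ge f_ge => //; [exact: marg2_ge0 | exact: (PbarK _).1].
Qed.

Section Code.
Variables (U : finType) (E : X -> U -> R) (D : U -> Sh * Xh -> R).
Hypotheses (EK : is_kernel E) (DK : is_kernel D).

Lemma excess_prob_kcomp : excess_prob (kcomp E D) =
  \sum_(sx : S * X) \sum_(u : U) \sum_(zy : Sh * Xh)
    P sx * E sx.2 u * D u zy * ((ds < dS sx.1 zy.1) || (dx < dX sx.2 zy.2))%:R.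
Proof.
apply: eq_bigr => sx _; rewrite exchange_big /=; apply: eq_bigr => zy _.
by rewrite /kcomp mulr_sumr mulr_suml; apply: eq_bigr => u _; rewrite !mulrA.
Qed.

Lemma density_tail_prob_kcomp (Pbar : Sh * Xh -> X -> R) c :
  is_kernel Pbar -> 0 < c -> density_tail_prob (kcomp E D) Pbar c <= #|U|%:R / c.
Proof.
move=> PbarK c_gt0; rewrite /density_tail_prob.
under eq_bigr do under eq_bigr do rewrite -mulrA.
under eq_bigr do rewrite -mulr_sumr.
rewrite (sum_marg2 P (fun x =>
  \sum_zy kcomp E D x zy * (marg2 P x * c <= Pbar zy x)%R%:R)).
apply: (@le_trans _ _ (\sum_x \sum_zy Pbar zy x * (\sum_u D u zy) / c)).
  apply: ler_sum => x _; rewrite mulr_sumr; apply: ler_sum => zy _.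
  rewrite mulrA indicator_markov ?marg2_ge0 ?kcomp_le_colsum ?andbT //.
    exact: (kcomp_kernel EK DK x).1.
  exact: (PbarK zy).1.
rewrite exchange_big /=.
under eq_bigr do rewrite -!mulr_suml (PbarK _).2 mul1r.
by rewrite -mulr_suml sum_colsum.
Qed.

End Code.
End Converse.

Theorem theorem3 (R : realType) (S X Sh Xh : finType) (P : S * X -> R)
    (dS : S -> Sh -> R) (dX : X -> Xh -> R) (ds dx : R) (M : nat) (eps b : R) :
  1 < b ->
  is_pmf P ->
  (forall s z, 0 <= dS s z) -> (forall x y, 0 <= dX x y) ->
  0 <= ds -> 0 <= dx ->
  is_code P dS dX M ds dx eps ->
  (ereal_inf [set ereal_sup
      [set ereal_sup
         [set ((prob_f_ge b P W Pbar dS dX ds dx M g - b `^ (- g))%R)%:E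
         | g in [set g : R | (0 <= g)%R]]
      | Pbar in [set Pbar | admissible P W Pbar]]
    | W in [set W : X -> Sh * Xh -> R | is_kernel W]] <= eps%:E)%E.
Proof.
move=> b_gt1 Ppmf _ _ _ _ [E [D [EK DK code_eps]]].
have X_gt0 : (0 < #|X|)%N.
  by move: (pmf_card_gt0 Ppmf); rewrite card_prod muln_gt0 => /andP[].
have M_gt0 : (0 < M)%N by rewrite -[M]card_ord; exact: kernel_card_gt0 X_gt0 EK.
have P_ge0 := Ppmf.1.
have W_ge0 x zy : 0 <= kcomp E D x zy := (kcomp_kernel EK DK x).1 zy.
apply: le_trans (ereal_inf_lbound _) _.
  by exists (kcomp E D) => //; exact: kcomp_kernel.
apply: ge_ereal_sup => _ [Pbar [PbarK _] <-]; apply: ge_ereal_sup => _ [g _ <-].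
have bg_gt0 : 0 < b `^ g by apply: powR_gt0; apply: lt_trans b_gt1.
rewrite lee_fin lerBlDr.
apply: le_trans; first exact: prob_f_ge_split.
apply: lerD; first by rewrite excess_prob_kcomp.
apply: le_trans; first by apply: density_tail_prob_kcomp; rewrite // mulr_gt0 ?ltr0n.
by rewrite card_ord powRN invfM mulrA divff ?mul1r // pnatr_eq0 -lt0n.
Qed.
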